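(* (Simulation.) For all expressions $e, e'$ and every natural number $n$: if $e\Rightarrow^{n} e'$, then $|e|\mapsto^{*}|e'|$.
   Context: This concerns the ''filtered stepper calculus''. Syntax: actions $a ::= \mathsf{skip} \mid \mathsf{step}$; gas $g ::= \mathsf{one} \mid \mathsf{all}$; priorities $l \in \mathbb{N}$. Patterns $p ::= x \mid p(p) \mid \lambda x.p \mid p+p \mid \underline{n} \mid \$e \mid \$v$. A filter is a triple $f=(p,a,g)$. Expressions $e ::= x \mid e(e) \mid \lambda x.e \mid \mathrm{fix}\,x.e \mid e+e \mid \underline{n} \mid \mathrm{filter}_f(e) \mid \langle e\rangle^{a,g,l}$ (the last is called a residue), taken up to $\alpha$-equivalence; $\underline{n}$ ranges over numerals. Evaluation contexts $\mathcal{E} ::= \circ \mid \mathcal{E}(e) \mid e(\mathcal{E}) \mid \mathcal{E}+e \mid e+\mathcal{E} \mid \mathrm{filter}_f(\mathcal{E}) \mid \langle \mathcal{E}\rangle^{a,g,l}$, with exactly one hole; $\mathcal{E}[e]$ is the result of plugging $e$ into the hole. The values are exactly $\lambda x.e$ and numerals $\underline{n}$ (fixpoints, filters and residues are never values). Substitution $[v/x]e$ is standard capture-avoiding substitution, which passes through residues unchanged, through filters (substituting also into the filter's pattern), and stops at binders $\lambda x$ and $\mathrm{fix}\,x$ of the same variable. Stripping $|e|$ erases all filter and residue wrappers recursively: $|\mathrm{filter}_f(e)|=|e|$, $|\langle e\rangle^{a,g,l}|=|e|$, and $|\cdot|$ commutes with all other constructors. Matching $p \triangleright e$ is defined inductively: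 $\$e \triangleright e$ for all $e$; $\$v \triangleright v$ for every value $v$; $\underline{n}\triangleright\underline{n}$; $\lambda x_1.e_1 \triangleright \lambda x_2.e_2$ if $|e_1| \equiv_\alpha |e_2|$; $\mathrm{fix}\,x_1.e_1 \triangleright \mathrm{fix}\,x_2.e_2$ if $|e_1|\equiv_\alpha |e_2|$; $p_1(p_2)\triangleright e_1(e_2)$ if $p_1\triangleright e_1$ and $p_2\triangleright e_2$; $p_1+p_2\triangleright e_1+e_2$ likewise; there are no other rules. Instrumentation $e \to_{p,a,g,l} e'$ is the inductively defined relation: values and variables and $\mathrm{fix}\,x.e$ are left unchanged; $\langle e_0\rangle^{a',g',l'} \to_{p,a,g,l} \langle e\rangle^{a',g',l'}$ if $e_0\to_{p,a,g,l} e$; $\mathrm{filter}_{(p',a',g')}(e_0)\to_{p,a,g,l}\mathrm{filter}_{(p',a',g')}(e')$ if $e_0\to_{p,a,g,l} e$ and $e \to_{p',a',g',l+1} e'$; for $e_1(e_2)$, if $e_1\to_{p,a,g,l} e_1'$ and $e_2\to_{p,a,g,l} e_2'$ then $e_1(e_2)\to_{p,a,g,l}\langle e_1'(e_2')\rangle^{a,g,l}$ when $p\triangleright e_1(e_2)$ and $e_1(e_2)\to_{p,a,g,l} e_1'(e_2')$ when not; identically for $e_1+e_2$. Decomposition $e = \mathcal{E}[e_0]$ (with $e_0$ a redex) is the non-deterministic relation: $\langle v\rangle^{a,g,l}$ and $\mathrm{filter}_f(v)$ with $v$ a value decompose as hole $\circ$ with redex themselves; if $e$ decomposes as $\mathcal{E}$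 and $e_0$ then $\langle e\rangle^{a,g,l}$ decomposes as $\langle\mathcal{E}\rangle^{a,g,l}$ and $e_0$, and $\mathrm{filter}_f(e)$ as $\mathrm{filter}_f(\mathcal{E})$ and $e_0$; $e_1(e_2)$ decomposes as $\mathcal{E}_1(e_2)$ if $e_1$ decomposes as $\mathcal{E}_1$, as $e_1(\mathcal{E}_2)$ if $e_1$ is a value and $e_2$ decomposes as $\mathcal{E}_2$, and as $\circ$ with redex $e_1(e_2)$ if both are values; identically for $e_1+e_2$; $\mathrm{fix}\,x.e$ decomposes as $\circ$ with redex itself. Instruction transitions $e_0 \to e'$: $(\lambda x.e_1)(v)\to [v/x]e_1$ for a value $v$; $\underline{n_1}+\underline{n_2}\to\underline{n_1+n_2}$; $\mathrm{fix}\,x.e\to[\mathrm{fix}\,x.e/x]e$; $\langle v\rangle^{a,g,l}\to v$ and $\mathrm{filter}_f(v)\to v$ for a value $v$. Decay ${\downarrow}\mathcal{E}$ recursively removes every residue with gas $\mathsf{one}$ (replacing $\langle e\rangle^{a,\mathsf{one},l}$ by the decay of $e$), keeps residues with gas $\mathsf{all}$ and filters, applies recursively to all subterms, and maps the hole to the hole. Action selection $(a,l)\vdash\mathcal{E}\Downarrow a'$: $(a,l)\vdash\circ\Downarrow a$; for context nodes of the form application, addition or filter, the judgment passes unchanged into the subcontext containing the hole; $(a_0,l_0)\vdash\langle\mathcal{E}\rangle^{a,g,l}\Downarrow a'$ holds if either $l\le l_0$ and $(a_0,l_0)\vdash\mathcal{E}\Downarrow a'$, or $l>l_0$ and $(a,l)\vdash\mathcal{E}\Downarrow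 a'$. An expression is strippable if it has the form $\mathrm{filter}_f(e)$ or $\langle e\rangle^{a,g,l}$. Filtered stepping $e\Rightarrow^n e'$ is defined inductively: (i) $v\Rightarrow^0 v$ for every value $v$; (ii) if $e\to_{\$e,\mathsf{step},\mathsf{one},0} e_i$, $e_i=\mathcal{E}_0[e_0]$ (decomposition), $e_0\to e_t$, $e_1=({\downarrow}\mathcal{E}_0)[e_t]$, $(\mathsf{step},0)\vdash\mathcal{E}_0\Downarrow\mathsf{step}$ and $e_0$ is not strippable, then $e\Rightarrow^1 e_1$; (iii) with $e_i,\mathcal{E}_0,e_0,e_t,e_1$ as in (ii), if $(\mathsf{step},0)\vdash\mathcal{E}_0\Downarrow\mathsf{skip}$ and $e_1\Rightarrow^n e_2$, then $e\Rightarrow^{n+1}e_2$; (iv) with the same data, if $e_0$ is strippable and $e_1\Rightarrow^n e_2$, then $e\Rightarrow^{n+1}e_2$. Unfiltered step: $e\mapsto e'$ holds if $e=\mathcal{E}_0[e_0]$ is a decomposition, $e_0\to e_0'$, and $e'=\mathcal{E}_0[e_0']$. $\mapsto^{*}$ is its reflexive–transitive closure ($e\mapsto^* e$; and $e\mapsto e_1$, $e_1\mapsto^* e'$ imply $e\mapsto^* e'$). *)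

(* Filtered stepper calculus, de Bruijn representation
   (terms are therefore identified up to alpha-equivalence). *)
From Stdlib Require Import Arith.

Inductive act : Type := Skip | Step.
Inductive gas : Type := One | All.

(* Expressions are the terms satisfying
   [is_expr]; patterns are arbitrary terms (they may contain the
   pattern-only forms [AnyE] = $e and [AnyV] = $v, and, after
   substitution, arbitrary expressions). *)
Inductive exp : Type :=
| Var    : nat -> exp
| Ap     : exp -> exp -> exp
| Lam    : exp -> exp
| Fix    : exp -> exp
| Plus   : exp -> exp -> exp
| Num    : nat -> exp
| Filter : exp -> act -> gas -> exp -> exp
| Res    : exp -> act -> gas -> nat -> exp
| AnyE   : exp
| AnyV   : exp.

Fixpoint is_expr (e : exp) : Prop :=
  match e with
  | Var _ | Num _ => True
  | Ap e1 e2 | Plus e1 e2 => is_expr e1 /\ is_expr e2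
  | Lam b | Fix b => is_expr b
  | Filter _ _ _ b => is_expr b
  | Res b _ _ _ => is_expr b
  | AnyE | AnyV => False
  end.

Definition value (e : exp) : Prop :=
  match e with Lam _ | Num _ => True | _ => False end.

Fixpoint shift (c : nat) (e : exp) : exp :=
  match e with
  | Var i => if i <? c then Var i else Var (S i)
  | Ap e1 e2 => Ap (shift c e1) (shift c e2)
  | Lam b => Lam (shift (S c) b)
  | Fix b => Fix (shift (S c) b)
  | Plus e1 e2 => Plus (shift c e1) (shift c e2)
  | Num n => Num n
  | Filter p a g b => Filter (shift c p) a g (shift c b)
  | Res b a g l => Res (shift c b) a g l
  | AnyE => AnyE
  | AnyV => AnyV
  end.

Fixpoint subst (j : nat) (s : exp) (e : exp) : exp :=
  match e with
  | Var i => if i =? j then s else if j <? i then Var (pred i) else Var i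
  | Ap e1 e2 => Ap (subst j s e1) (subst j s e2)
  | Lam b => Lam (subst (S j) (shift 0 s) b)
  | Fix b => Fix (subst (S j) (shift 0 s) b)
  | Plus e1 e2 => Plus (subst j s e1) (subst j s e2)
  | Num n => Num n
  | Filter p a g b => Filter (subst j s p) a g (subst j s b)
  | Res b a g l => Res (subst j s b) a g l
  | AnyE => AnyE
  | AnyV => AnyV
  end.

Fixpoint strip (e : exp) : exp :=
  match e with
  | Var i => Var i
  | Ap e1 e2 => Ap (strip e1) (strip e2)
  | Lam b => Lam (strip b)
  | Fix b => Fix (strip b)
  | Plus e1 e2 => Plus (strip e1) (strip e2)
  | Num n => Num n
  | Filter _ _ _ b => strip b
  | Res b _ _ _ => strip b
  | AnyE => AnyE
  | AnyV => AnyV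
  end.

Inductive matches : exp -> exp -> Prop :=
| M_anye : forall e, matches AnyE e
| M_anyv : forall v, value v -> matches AnyV v
| M_num : forall n, matches (Num n) (Num n)
| M_lam : forall e1 e2, strip e1 = strip e2 -> matches (Lam e1) (Lam e2)
| M_fix : forall e1 e2, strip e1 = strip e2 -> matches (Fix e1) (Fix e2)
| M_ap : forall p1 p2 e1 e2, matches p1 e1 -> matches p2 e2 ->
    matches (Ap p1 p2) (Ap e1 e2)
| M_plus : forall p1 p2 e1 e2, matches p1 e1 -> matches p2 e2 ->
    matches (Plus p1 p2) (Plus e1 e2).

Inductive instr : exp -> act -> gas -> nat -> exp -> exp -> Prop :=
| I_val : forall p a g l v, value v -> instr p a g l v v
| I_var : forall p a g l x, instr p a g l (Var x) (Var x)
| I_fix : forall p a g l b, instr p a g l (Fix b) (Fix b)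
| I_res : forall p a g l e0 e a' g' l',
    instr p a g l e0 e -> instr p a g l (Res e0 a' g' l') (Res e a' g' l')
| I_filter : forall p a g l e0 e e' p' a' g',
    instr p a g l e0 e -> instr p' a' g' (S l) e e' ->
    instr p a g l (Filter p' a' g' e0) (Filter p' a' g' e')
| I_ap_m : forall p a g l e1 e2 e1' e2',
    instr p a g l e1 e1' -> instr p a g l e2 e2' -> matches p (Ap e1 e2) ->
    instr p a g l (Ap e1 e2) (Res (Ap e1' e2') a g l)
| I_ap_n : forall p a g l e1 e2 e1' e2',
    instr p a g l e1 e1' -> instr p a g l e2 e2' -> ~ matches p (Ap e1 e2) ->
    instr p a g l (Ap e1 e2) (Ap e1' e2')
| I_plus_m : forall p a g l e1 e2 e1' e2',
    instr p a g l e1 e1' -> instr p a g l e2 e2' -> matches p (Plus e1 e2) ->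
    instr p a g l (Plus e1 e2) (Res (Plus e1' e2') a g l)
| I_plus_n : forall p a g l e1 e2 e1' e2',
    instr p a g l e1 e1' -> instr p a g l e2 e2' -> ~ matches p (Plus e1 e2) ->
    instr p a g l (Plus e1 e2) (Plus e1' e2').

Inductive ctx : Type :=
| Hole : ctx
| CApL : ctx -> exp -> ctx
| CApR : exp -> ctx -> ctx
| CPlusL : ctx -> exp -> ctx
| CPlusR : exp -> ctx -> ctx
| CFilter : exp -> act -> gas -> ctx -> ctx
| CRes : ctx -> act -> gas -> nat -> ctx.

Fixpoint plug (E : ctx) (e : exp) : exp :=
  match E with
  | Hole => e
  | CApL E1 e2 => Ap (plug E1 e) e2
  | CApR e1 E2 => Ap e1 (plug E2 e)
  | CPlusL E1 e2 => Plus (plug E1 e) e2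
  | CPlusR e1 E2 => Plus e1 (plug E2 e)
  | CFilter p a g E1 => Filter p a g (plug E1 e)
  | CRes E1 a g l => Res (plug E1 e) a g l
  end.

Inductive decomp : exp -> ctx -> exp -> Prop :=
| D_resv : forall v a g l, value v -> decomp (Res v a g l) Hole (Res v a g l)
| D_filterv : forall p a g v, value v ->
    decomp (Filter p a g v) Hole (Filter p a g v)
| D_res : forall e E e0 a g l, decomp e E e0 ->
    decomp (Res e a g l) (CRes E a g l) e0
| D_filter : forall p a g e E e0, decomp e E e0 ->
    decomp (Filter p a g e) (CFilter p a g E) e0
| D_apl : forall e1 e2 E1 e0, decomp e1 E1 e0 -> decomp (Ap e1 e2) (CApL E1 e2) e0
| D_apr : forall e1 e2 E2 e0, value e1 -> decomp e2 E2 e0 ->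
    decomp (Ap e1 e2) (CApR e1 E2) e0
| D_ap : forall e1 e2, value e1 -> value e2 -> decomp (Ap e1 e2) Hole (Ap e1 e2)
| D_plusl : forall e1 e2 E1 e0, decomp e1 E1 e0 ->
    decomp (Plus e1 e2) (CPlusL E1 e2) e0
| D_plusr : forall e1 e2 E2 e0, value e1 -> decomp e2 E2 e0 ->
    decomp (Plus e1 e2) (CPlusR e1 E2) e0
| D_plus : forall e1 e2, value e1 -> value e2 -> decomp (Plus e1 e2) Hole (Plus e1 e2)
| D_fix : forall b, decomp (Fix b) Hole (Fix b).

Inductive itrans : exp -> exp -> Prop :=
| T_beta : forall b v, value v -> itrans (Ap (Lam b) v) (subst 0 v b)
| T_plus : forall n1 n2, itrans (Plus (Num n1) (Num n2)) (Num (n1 + n2))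
| T_fix : forall b, itrans (Fix b) (subst 0 (Fix b) b)
| T_res : forall v a g l, value v -> itrans (Res v a g l) v
| T_filter : forall p a g v, value v -> itrans (Filter p a g v) v.

Fixpoint decay_exp (e : exp) : exp :=
  match e with
  | Var i => Var i
  | Ap e1 e2 => Ap (decay_exp e1) (decay_exp e2)
  | Lam b => Lam (decay_exp b)
  | Fix b => Fix (decay_exp b)
  | Plus e1 e2 => Plus (decay_exp e1) (decay_exp e2)
  | Num n => Num n
  | Filter p a g b => Filter p a g (decay_exp b)
  | Res b a One l => decay_exp b
  | Res b a All l => Res (decay_exp b) a All l
  | AnyE => AnyE
  | AnyV => AnyV
  end.

Fixpoint decay (E : ctx) : ctx :=
  match E with
  | Hole => Hole
  | CApL E1 e2 => CApL (decay E1) (decay_exp e2)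
  | CApR e1 E2 => CApR (decay_exp e1) (decay E2)
  | CPlusL E1 e2 => CPlusL (decay E1) (decay_exp e2)
  | CPlusR e1 E2 => CPlusR (decay_exp e1) (decay E2)
  | CFilter p a g E1 => CFilter p a g (decay E1)
  | CRes E1 a One l => decay E1
  | CRes E1 a All l => CRes (decay E1) a All l
  end.

Inductive select : act -> nat -> ctx -> act -> Prop :=
| S_hole : forall a l, select a l Hole a
| S_apl : forall a l E e a', select a l E a' -> select a l (CApL E e) a'
| S_apr : forall a l E e a', select a l E a' -> select a l (CApR e E) a'
| S_plusl : forall a l E e a', select a l E a' -> select a l (CPlusL E e) a'
| S_plusr : forall a l E e a', select a l E a' -> select a l (CPlusR e E) a'
| S_filter : forall a l E p a1 g1 a', select a l E a' ->
    select a l (CFilter p a1 g1 E) a'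
| S_res_le : forall a0 l0 E a g l a', l <= l0 -> select a0 l0 E a' ->
    select a0 l0 (CRes E a g l) a'
| S_res_gt : forall a0 l0 E a g l a', l > l0 -> select a l E a' ->
    select a0 l0 (CRes E a g l) a'.

Definition strippable (e : exp) : Prop :=
  match e with Filter _ _ _ _ | Res _ _ _ _ => True | _ => False end.

Inductive fstep : exp -> nat -> exp -> Prop :=
| F_val : forall v, value v -> fstep v 0 v
| F_step : forall e ei E0 e0 et e1,
    instr AnyE Step One 0 e ei -> decomp ei E0 e0 -> itrans e0 et ->
    e1 = plug (decay E0) et -> select Step 0 E0 Step -> ~ strippable e0 ->
    fstep e 1 e1
| F_skip : forall e ei E0 e0 et e1 n e2,
    instr AnyE Step One 0 e ei -> decomp ei E0 e0 -> itrans e0 et ->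
    e1 = plug (decay E0) et -> select Step 0 E0 Skip -> fstep e1 n e2 ->
    fstep e (S n) e2
| F_strip : forall e ei E0 e0 et e1 n e2,
    instr AnyE Step One 0 e ei -> decomp ei E0 e0 -> itrans e0 et ->
    e1 = plug (decay E0) et -> strippable e0 -> fstep e1 n e2 ->
    fstep e (S n) e2.

Inductive ustep : exp -> exp -> Prop :=
| U_step : forall e E0 e0 e0', decomp e E0 e0 -> itrans e0 e0' ->
    ustep e (plug E0 e0').

Inductive ustar : exp -> exp -> Prop :=
| US_refl : forall e, ustar e e
| US_step : forall e e1 e', ustep e e1 -> ustar e1 e' -> ustar e e'.

(* Stripping erases exactly the filters and residues, and it commutes with
   plugging, substitution and decay, while instrumentation and decay only add
   or remove such wrappers.  Hence a filtered step either discharges a filter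
   or residue around a value, which is invisible after stripping, or contracts
   an ordinary redex, and then the stripped redex is an ordinary redex of the
   stripped term in the stripped context: an unfiltered step. *)
From Stdlib Require Import Arith.

Fixpoint strip_ctx (E : ctx) : ctx :=
  match E with
  | Hole => Hole
  | CApL E1 e2 => CApL (strip_ctx E1) (strip e2)
  | CApR e1 E2 => CApR (strip e1) (strip_ctx E2)
  | CPlusL E1 e2 => CPlusL (strip_ctx E1) (strip e2)
  | CPlusR e1 E2 => CPlusR (strip e1) (strip_ctx E2)
  | CFilter _ _ _ E1 => strip_ctx E1
  | CRes E1 _ _ _ => strip_ctx E1
  end.

Lemma strip_plug (E : ctx) (e : exp) :
  strip (plug E e) = plug (strip_ctx E) (strip e).
Proof. induction E; simpl; rewrite ?IHE; reflexivity. Qed.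

Lemma strip_decay_exp (e : exp) : strip (decay_exp e) = strip e.
Proof. induction e; simpl; try destruct g; simpl; congruence. Qed.

Lemma strip_plug_decay (E : ctx) (e : exp) :
  strip (plug (decay E) e) = strip (plug E e).
Proof.
  induction E; simpl; try destruct g; simpl; rewrite ?strip_decay_exp, ?IHE;
    reflexivity.
Qed.

Lemma strip_shift (c : nat) (e : exp) : strip (shift c e) = shift c (strip e).
Proof.
  revert c; induction e; intro c; simpl; try congruence.
  destruct (n <? c); reflexivity.
Qed.

Lemma strip_subst (j : nat) (s e : exp) :
  strip (subst j s e) = subst j (strip s) (strip e).
Proof.
  revert j s; induction e; intros j s; simpl; rewrite ?IHe, ?strip_shift;
    try congruence.
  destruct (n =? j); [reflexivity |].
  destruct (j <? n); reflexivity.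
Qed.

Lemma value_strip (v : exp) : value v -> value (strip v).
Proof. destruct v; simpl; tauto. Qed.

Lemma strippable_dec (e : exp) : strippable e \/ ~ strippable e.
Proof. destruct e; simpl; tauto. Qed.

Lemma strip_instr (p : exp) (a : act) (g : gas) (l : nat) (e ei : exp) :
  instr p a g l e ei -> strip ei = strip e.
Proof. induction 1; simpl; congruence. Qed.

Lemma decomp_plug (e : exp) (E : ctx) (e0 : exp) :
  decomp e E e0 -> plug E e0 = e.
Proof. induction 1; simpl; congruence. Qed.

Lemma decomp_strip (e : exp) (E : ctx) (e0 : exp) :
  decomp e E e0 -> ~ strippable e0 ->
  decomp (strip e) (strip_ctx E) (strip e0).
Proof.
  induction 1; intro Hns; simpl in *;
    try (exfalso; apply Hns; exact I);
    try exact (IHdecomp Hns);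
    constructor; auto using value_strip.
Qed.

Lemma itrans_strip (e0 et : exp) :
  itrans e0 et -> ~ strippable e0 -> itrans (strip e0) (strip et).
Proof.
  destruct 1; intro Hns; simpl in *; try (exfalso; apply Hns; exact I).
  - rewrite strip_subst; constructor; apply value_strip; assumption.
  - constructor.
  - rewrite strip_subst; constructor.
Qed.

Lemma itrans_strippable_strip (e0 et : exp) :
  itrans e0 et -> strippable e0 -> strip et = strip e0.
Proof. destruct 1; simpl; tauto. Qed.

Lemma decomp_itrans_strip (e : exp) (E : ctx) (e0 et : exp) :
  decomp e E e0 -> itrans e0 et ->
  strip (plug (decay E) et) = strip e
  \/ ustep (strip e) (strip (plug (decay E) et)).
Proof.
  intros Hd Ht.
  rewrite strip_plug_decay, strip_plug.
  destruct (strippable_dec e0) as [Hs | Hns].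
  - left.
    rewrite (itrans_strippable_strip _ _ Ht Hs), <- strip_plug.
    rewrite (decomp_plug _ _ _ Hd); reflexivity.
  - right.
    apply U_step with (strip e0);
      [apply decomp_strip | apply itrans_strip]; assumption.
Qed.

Lemma instr_decomp_itrans_strip (p : exp) (a : act) (g : gas) (l : nat)
    (e ei : exp) (E : ctx) (e0 et : exp) :
  instr p a g l e ei -> decomp ei E e0 -> itrans e0 et ->
  strip (plug (decay E) et) = strip e
  \/ ustep (strip e) (strip (plug (decay E) et)).
Proof.
  intros Hi Hd Ht.
  rewrite <- (strip_instr _ _ _ _ _ _ Hi).
  exact (decomp_itrans_strip _ _ _ _ Hd Ht).
Qed.

Lemma ustar_eq_or_step (x y z : exp) :
  y = x \/ ustep x y -> ustar y z -> ustar x z.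
Proof.
  intros [-> | Hxy] Hyz; [exact Hyz | exact (US_step _ _ _ Hxy Hyz)].
Qed.

Lemma fstep_ustar_strip (e : exp) (n : nat) (e' : exp) :
  fstep e n e' -> ustar (strip e) (strip e').
Proof.
  induction 1 as [| e ei E0 e0 et e1 Hi Hd Ht | e ei E0 e0 et e1 n e2 Hi Hd Ht
                 | e ei E0 e0 et e1 n e2 Hi Hd Ht];
    [apply US_refl | ..]; subst e1;
    apply ustar_eq_or_step with (strip (plug (decay E0) et));
    eauto using instr_decomp_itrans_strip, US_refl.
Qed.

Theorem theorem4 : forall (e e' : exp) (n : nat),
  is_expr e -> is_expr e' -> fstep e n e' -> ustar (strip e) (strip e').
Proof.
  intros e e' n _ _.
  apply fstep_ustar_strip.
Qed.
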